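(* In $\mathbb P\Gamma$, the formula $f:(W,V),e:\mathbf N\mid\forall x:\mathbf N.\exists y:\mathbf N.\overline{ev}(e,x,y,f)$ in $\mathbb P\Gamma(W\times\mathbf N)$ has a Skolem arrow for $\mathbf N$; namely the arrow $\epsilon:(W,V)\to\mathbf N$ given by $(g,t)\mapsto t$ satisfies $\exists e:\mathbf N.\forall x.\exists y.\overline{ev}(e,x,y,f)=\forall x.\exists y.\overline{ev}(\epsilon(f),x,y,f)$ in $\mathbb P\Gamma(W)$.
   Context: $\mathbf{PAsm}$ is the category of partitioned assemblies: objects $(P,T)$ with $P$ a set and $T:P\to\mathbb N$; arrows are functions tracked by an index of a partial recursive function. $\mathbf N=(\mathbb N,\mathrm{id})$; $(W,V)$ is the weak exponential of $\mathbf N$ with $\mathbf N$ with $W=\{(g,t)\in\mathbb N^{\mathbb N}\times\mathbb N\mid t\text{ tracks }g\}$, $V(g,t)=t$, $ev((g,t),x)=g(x)$. $\mathbb P\Gamma$ sends $(P,T)$ to the powerset of $P$, acting by inverse image, with set-theoretic quantifiers. $\overline{ev}(e,x,y,f)$ denotes $T(e,x,y)=1\wedge U(y)=ev(f,x)$, where $T,U$ are Kleene's primitive recursive T-predicate and output function. For $\alpha\in P(Y\times B)$, an arrow $\epsilon:Y\to B$ is a Skolem arrow for $B$ in $\alpha$ if $\exists_{pr_1}\alpha=P_{\langle\mathrm{id}_Y,\epsilon\rangle}(\alpha)$. *)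

From Stdlib Require Import Arith Bool Cantor.

Inductive code : Type :=
| CZero
| CSucc
| CId
| CFst
| CSnd
| CComp (c1 c2 : code)
| CPair (c1 c2 : code)
| CRec  (c1 c2 : code)        (* <a,0> |-> c1 a ; <a,n+1> |-> c2 <a,<n,h(a,n)>> *)
| CMu   (c : code).           (* x |-> least n with c <x,n> = 0 (all earlier defined) *)

Definition pair (a b : nat) : nat := Cantor.to_nat (a, b).
Definition unpair (n : nat) : nat * nat := Cantor.of_nat n.

Definition obind (o : option nat) (k : nat -> option nat) : option nat :=
  match o with Some v => k v | None => None end.

Fixpoint eval (fuel : nat) (c : code) (x : nat) {struct fuel} : option nat :=
  match fuel with
  | 0 => None
  | S f =>
    match c with
    | CZero => Some 0
    | CSucc => Some (S x)
    | CId => Some x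
    | CFst => Some (fst (unpair x))
    | CSnd => Some (snd (unpair x))
    | CComp c1 c2 => obind (eval f c2 x) (eval f c1)
    | CPair c1 c2 =>
        obind (eval f c1 x) (fun a => obind (eval f c2 x) (fun b => Some (pair a b)))
    | CRec c1 c2 =>
        let a := fst (unpair x) in
        (fix rec (n : nat) : option nat :=
           match n with
           | 0 => eval f c1 a
           | S m => obind (rec m) (fun h => eval f c2 (pair a (pair m h)))
           end) (snd (unpair x))
    | CMu c1 =>
        (fix search (k j : nat) : option nat :=
           match k with
           | 0 => None
           | S k' =>
             match eval f c1 (pair x j) with
             | Some 0 => Some j
             | Some _ => search k' (S j)
             | None => None
             end
           end) f 0
    end
  end.

Fixpoint decode_aux (fuel n : nat) : code :=
  match fuel with
  | 0 => CZero
  | S f =>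
    let (tag, r) := unpair n in
    let (a, b) := unpair r in
    match tag with
    | 0 => CZero
    | 1 => CSucc
    | 2 => CId
    | 3 => CFst
    | 4 => CSnd
    | 5 => CComp (decode_aux f a) (decode_aux f b)
    | 6 => CPair (decode_aux f a) (decode_aux f b)
    | 7 => CRec (decode_aux f a) (decode_aux f b)
    | 8 => CMu (decode_aux f a)
    | _ => CZero
    end
  end.

Definition decode (e : nat) : code := decode_aux (S e) e.

Fixpoint none_below (k : nat) (c : code) (x : nat) : bool :=
  match k with
  | 0 => true
  | S k' => match eval k' c x with None => none_below k' c x | Some _ => false end
  end.

(* Kleene's T-predicate: T e x y = 1 iff y = <k, v> codes the (unique,
   minimal-fuel) halting computation of program e on input x with output v. *)
Definition KT (e x y : nat) : nat :=
  let (k, v) := unpair y in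
  match eval k (decode e) x with
  | Some w => if Nat.eqb w v && none_below k (decode e) x then 1 else 0
  | None => 0
  end.

Definition KU (y : nat) : nat := snd (unpair y).

Definition computes (e x v : nat) : Prop := exists y, KT e x y = 1 /\ KU y = v.

Record PAsm : Type := { carrier :> Type; realizer : carrier -> nat }.

Definition tracks {P Q : PAsm} (e : nat) (f : P -> Q) : Prop :=
  forall p : P, computes e (realizer P p) (realizer Q (f p)).

Record Hom (P Q : PAsm) : Type :=
  { hom_fun :> P -> Q; hom_tracked : exists e, tracks e hom_fun }.
Arguments hom_fun {P Q}.

Definition Nobj : PAsm := {| carrier := nat; realizer := fun n => n |}.

Definition prodA (P Q : PAsm) : PAsm :=
  {| carrier := (P * Q)%type;
     realizer := fun pq => pair (realizer P (fst pq)) (realizer Q (snd pq)) |}.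

Definition tracks_fun (t : nat) (g : nat -> nat) : Prop :=
  forall x, computes t x (g x).

(* weak exponential (W,V) of N with N *)
Definition Wcar : Type := { gt : (nat -> nat) * nat | tracks_fun (snd gt) (fst gt) }.
Definition Wobj : PAsm := {| carrier := Wcar; realizer := fun w => snd (proj1_sig w) |}.
Definition ev (f : Wcar) (x : nat) : nat := fst (proj1_sig f) x.

Definition PG (P : PAsm) : Type := P -> Prop.
Definition PGeq {P : PAsm} (a b : PG P) : Prop := forall p, a p <-> b p.
Definition reindex {P Q : PAsm} (f : Hom P Q) (b : PG Q) : PG P := fun p => b (f p).
Definition exists_pr1 {Y B : PAsm} (a : PG (prodA Y B)) : PG Y :=
  fun y => exists b : B, a (y, b).

Definition pairing_id {Y B : PAsm} (eps : Hom Y B) (y : Y) : prodA Y B := (y, eps y).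

(* <id_Y, eps> is a PAsm arrow whenever eps is one; we reindex along its
   underlying function (inverse image). *)
Definition is_skolem_arrow {Y B : PAsm} (a : PG (prodA Y B)) (eps : Hom Y B) : Prop :=
  PGeq (exists_pr1 a) (fun y => a (pairing_id eps y)).

Definition evbar (e x y : nat) (f : Wcar) : Prop := KT e x y = 1 /\ KU y = ev f x.

Definition alpha47 : PG (prodA Wobj Nobj) :=
  fun fe => forall x : nat, exists y : nat, evbar (snd fe) x y (fst fe).

(* Proof idea: a point (g, t) of the weak exponential carries an index t
   tracking g, so t itself witnesses "forall x, exists y, evbar(t, x, y, g)".
   Hence the realizer map (g, t) |-> t, which is tracked by the identity
   program, chooses a witness whenever one exists. *)
From Stdlib Require Import Arith Cantor.

Definition id_index : nat := pair 2 0.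

Lemma decode_id_index : decode id_index = CId.
Proof. vm_compute. reflexivity. Qed.

(* The computation trace [<1, x>]: fuel 1 suffices for [CId], with output [x]. *)
Lemma computes_id (x : nat) : computes id_index x x.
Proof.
  exists (pair 1 x). unfold KT, KU, pair, unpair.
  rewrite Cantor.cancel_of_to, decode_id_index. simpl.
  rewrite Nat.eqb_refl. split; reflexivity.
Qed.

Definition realizer_fun (P : PAsm) (p : P) : Nobj := realizer P p.

Lemma realizer_tracked (P : PAsm) : exists e, tracks e (realizer_fun P).
Proof. exists id_index. intro p. apply computes_id. Qed.

Definition realizer_hom (P : PAsm) : Hom P Nobj :=
  {| hom_fun := realizer_fun P; hom_tracked := realizer_tracked P |}.

Lemma is_skolem_arrow_intro {Y B : PAsm} (a : PG (prodA Y B)) (eps : Hom Y B) :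
  (forall (y : Y) (b : B), a (y, b) -> a (y, eps y)) -> is_skolem_arrow a eps.
Proof.
  intros choose y. split.
  - intros [b Hb]. exact (choose y b Hb).
  - intro H. exists (eps y). exact H.
Qed.

Lemma alpha47_realizer (w : Wcar) : alpha47 (w, realizer Wobj w).
Proof.
  destruct w as [[g t] tracks_g]. intro x.
  destruct (tracks_g x) as [y [Hy_halts Hy_out]].
  exists y. split; assumption.
Qed.

Theorem lemma4p7 :
  exists eps : Hom Wobj Nobj,
    (forall w : Wcar, eps w = snd (proj1_sig w)) /\
    is_skolem_arrow alpha47 eps.
Proof.
  exists (realizer_hom Wobj). split.
  - reflexivity.
  - apply is_skolem_arrow_intro. intros w _ _. apply alpha47_realizer.
Qed.
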